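(* Let $P$ be a closed process of the Value-Passing Quality Calculus in which variables and names are bound exactly once and all quality guards are $\forall$ or $\exists$. For all labels $l$ occurring in $P$, the formula $[\![l]\!]$ contains no literal $\bar{x}$ of an input variable; in particular, $[\![l]\!]$ only contains literals $\bar{c}$ related to channels $c$.
   Context: Syntax: $P ::= \mathsf{0} \mid (\nu c)P \mid P_1 \mid P_2 \mid {^l}b.P \mid {^l}\bar{c}\langle t\rangle.P \mid\ !P \mid {^l}\mathsf{case}\ x\ \mathsf{of}\ \mathsf{some}(y): P_1\ \mathsf{else}\ P_2$; binders $b ::= c?x \mid \&_q(b_1,\dots,b_n)$, with $[\![\forall]\!]$ = conjunction and $[\![\exists]\!]$ = disjunction; terms $t::=c\mid y$; labels are unique. Translation: $T(\mathsf{0},\varphi)=\emptyset$; $T(!P,\varphi)=T(P,\varphi)$; $T(P_1\mid P_2,\varphi)=T(P_1,\varphi)\cup T(P_2,\varphi)$; $T((\nu c)P,\varphi)=T(P,\varphi)$; $T({^l}b.P,\varphi)=T(P,\varphi\wedge \mathsf{hp}(b))\cup\mathsf{th}(\varphi,b)\cup\{\varphi\leadsto\bar{l}\}$; $T({^l}\bar{c}\langle t\rangle.P,\varphi)=T(P,\varphi)\cup\{\varphi\leadsto\bar{c}\}\cup\{\varphi\leadsto\bar{l}\}$; $T({^l}\mathsf{case}\ x\ \mathsf{of}\ \mathsf{some}(y):P_1\ \mathsf{else}\ P_2,\varphi)=T(P_1,\varphi\wedge\bar{x})\cup T(P_2,\varphi\wedge\neg\bar{x})\cup\{\varphi\leadsto\bar{l}\}$;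 with $\mathsf{hp}(c?x)=\bar{c}$, $\mathsf{th}(\varphi,c?x)=\{(\varphi\wedge\bar{c})\leadsto\bar{x}\}$, $\mathsf{hp}(\&_q(b_1,\dots,b_n))=[\![q]\!](\mathsf{hp}(b_1),\dots,\mathsf{hp}(b_n))$, $\mathsf{th}(\varphi,\&_q(b_1,\dots,b_n))=\bigcup_i\mathsf{th}(\varphi,b_i)$. Normalise $T(P,\mathsf{tt})$ by merging constraints with the same consequent $\bar{p}$ via disjunction of antecedents; reading $\leadsto$ as $\Rightarrow$ gives the set $P^l_{\Rightarrow}$. Tree formula: $[\![l]\!] = \mathcal{T}(\varphi,\emptyset)$ where $(\varphi\Rightarrow\bar{l})\in P^l_{\Rightarrow}$, and $\mathcal{T}(\cdot,\mathcal{D})$ (with $\mathcal{D}$ a set of literals) is defined by: $\mathcal{T}(\bar{c},\mathcal{D}) = \bar{c}\vee\mathcal{T}(\varphi,\mathcal{D}\cup\{\bar{c}\})$ if $\bar{c}\notin\mathcal{D}$ where $(\varphi\Rightarrow\bar{c})\in P^l_{\Rightarrow}$, and $=\bar{c}\vee\mathsf{ff}$ otherwise; $\mathcal{T}(\neg\bar{c},\mathcal{D})=\mathcal{T}(\neg\varphi,\mathcal{D}\cup\{\neg\bar{c}\})$ if $\neg\bar{c}\notin\mathcal{D}$ where $(\varphi\Rightarrow\bar{c})\in P^l_{\Rightarrow}$, and $=\mathsf{tt}$ otherwise; $\mathcal{T}(\bar{x},\mathcal{D})=\mathcal{T}(\varphi,\mathcal{D})$ and $\mathcal{T}(\neg\bar{x},\mathcal{D})=\mathcal{T}(\neg\varphi,\mathcal{D})$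 where $(\varphi\Rightarrow\bar{x})\in P^l_{\Rightarrow}$; $\mathcal{T}(\neg(\varphi_1\wedge\dots\wedge\varphi_n),\mathcal{D})=\bigvee_i\mathcal{T}(\neg\varphi_i,\mathcal{D})$; $\mathcal{T}(\neg(\varphi_1\vee\dots\vee\varphi_n),\mathcal{D})=\bigwedge_i\mathcal{T}(\neg\varphi_i,\mathcal{D})$; $\mathcal{T}(\varphi_1\wedge\dots\wedge\varphi_n,\mathcal{D})=\bigwedge_i\mathcal{T}(\varphi_i,\mathcal{D})$; $\mathcal{T}(\varphi_1\vee\dots\vee\varphi_n,\mathcal{D})=\bigvee_i\mathcal{T}(\varphi_i,\mathcal{D})$; $\mathcal{T}(\mathsf{tt},\mathcal{D})=\mathsf{tt}$; $\mathcal{T}(\mathsf{ff},\mathcal{D})=\mathsf{ff}$. *)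

From Stdlib Require Import List Arith PeanoNat.
Import ListNotations.

Definition name := nat.
Definition var := nat.
Definition label := nat.

Inductive quality := QAll | QEx.

Inductive binder :=
| BIn : name -> var -> binder
| BQ : quality -> list binder -> binder.

Inductive term := TName : name -> term | TVar : var -> term.

Inductive proc :=
| PNil : proc
| PNu : name -> proc -> proc
| PPar : proc -> proc -> proc
| PIn : label -> binder -> proc -> proc
| POut : label -> name -> term -> proc -> proc
| PBang : proc -> proc
| PCase : label -> var -> var -> proc -> proc -> proc.
  (* ^l case x of some(y): P1 else P2 *)

Inductive atom := AChan : name -> atom | AVar : var -> atom | ALab : label -> atom.

Definition atom_eq_dec (a b : atom) : {a = b} + {a <> b}.
Proof. decide equality; apply Nat.eq_dec. Defined.

Inductive Form :=
| FTT | FFF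
| FAtom : atom -> Form
| FNot : Form -> Form
| FAnd : Form -> Form -> Form
| FOr : Form -> Form -> Form.

Fixpoint atoms (f : Form) : list atom :=
  match f with
  | FTT | FFF => []
  | FAtom a => [a]
  | FNot g => atoms g
  | FAnd g h | FOr g h => atoms g ++ atoms h
  end.

Definition qop (q : quality) : Form -> Form -> Form :=
  match q with QAll => FAnd | QEx => FOr end.
Definition qunit (q : quality) : Form :=
  match q with QAll => FTT | QEx => FFF end.

Fixpoint hp (b : binder) : Form :=
  match b with
  | BIn c _ => FAtom (AChan c)
  | BQ q bs =>
      (fix go (l : list binder) : Form :=
         match l with
         | [] => qunit q
         | [b1] => hp b1
         | b1 :: r => qop q (hp b1) (go r)
         end) bs
  end.

(* constraints  phi ~> \bar p  represented as pairs (phi, p) *)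
Definition constr := (Form * atom)%type.

Fixpoint th (phi : Form) (b : binder) : list constr :=
  match b with
  | BIn c x => [(FAnd phi (FAtom (AChan c)), AVar x)]
  | BQ _ bs =>
      (fix go (l : list binder) : list constr :=
         match l with
         | [] => []
         | b1 :: r => th phi b1 ++ go r
         end) bs
  end.

Fixpoint Tr (P : proc) (phi : Form) : list constr :=
  match P with
  | PNil => []
  | PBang Q => Tr Q phi
  | PPar P1 P2 => Tr P1 phi ++ Tr P2 phi
  | PNu _ Q => Tr Q phi
  | PIn l b Q => Tr Q (FAnd phi (hp b)) ++ th phi b ++ [(phi, ALab l)]
  | POut l c _ Q => Tr Q phi ++ [(phi, AChan c); (phi, ALab l)]
  | PCase l x _ P1 P2 =>
      Tr P1 (FAnd phi (FAtom (AVar x)))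
      ++ Tr P2 (FAnd phi (FNot (FAtom (AVar x))))
      ++ [(phi, ALab l)]
  end.

(* Normalisation: the antecedent of \bar p in P_=> is the disjunction of all
   antecedents with consequent \bar p (the empty disjunction being ff). *)
Fixpoint disj (l : list Form) : Form :=
  match l with
  | [] => FFF
  | [f] => f
  | f :: r => FOr f (disj r)
  end.

Definition ante (C : list constr) (p : atom) : Form :=
  disj (map fst (filter (fun fa => if atom_eq_dec (snd fa) p then true else false) C)).

(* signed channel literals in the set D: (true,c) = \bar c, (false,c) = ~\bar c *)
Definition lits := list (bool * name).

(* Tree C D phi psi  :<->  T(phi, D) = psi  w.r.t. the normalised constraints C *)
Inductive Tree (C : list constr) : lits -> Form -> Form -> Prop :=
| Tr_chan_new : forall D c psi, ~ In (true, c) D ->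
    Tree C ((true, c) :: D) (ante C (AChan c)) psi ->
    Tree C D (FAtom (AChan c)) (FOr (FAtom (AChan c)) psi)
| Tr_chan_old : forall D c, In (true, c) D ->
    Tree C D (FAtom (AChan c)) (FOr (FAtom (AChan c)) FFF)
| Tr_nchan_new : forall D c psi, ~ In (false, c) D ->
    Tree C ((false, c) :: D) (FNot (ante C (AChan c))) psi ->
    Tree C D (FNot (FAtom (AChan c))) psi
| Tr_nchan_old : forall D c, In (false, c) D ->
    Tree C D (FNot (FAtom (AChan c))) FTT
| Tr_var : forall D x psi, Tree C D (ante C (AVar x)) psi ->
    Tree C D (FAtom (AVar x)) psi
| Tr_nvar : forall D x psi, Tree C D (FNot (ante C (AVar x))) psi ->
    Tree C D (FNot (FAtom (AVar x))) psi
| Tr_nand : forall D f g psif psig,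
    Tree C D (FNot f) psif -> Tree C D (FNot g) psig ->
    Tree C D (FNot (FAnd f g)) (FOr psif psig)
| Tr_nor : forall D f g psif psig,
    Tree C D (FNot f) psif -> Tree C D (FNot g) psig ->
    Tree C D (FNot (FOr f g)) (FAnd psif psig)
| Tr_and : forall D f g psif psig,
    Tree C D f psif -> Tree C D g psig -> Tree C D (FAnd f g) (FAnd psif psig)
| Tr_or : forall D f g psif psig,
    Tree C D f psif -> Tree C D g psig -> Tree C D (FOr f g) (FOr psif psig)
| Tr_tt : forall D, Tree C D FTT FTT
| Tr_ff : forall D, Tree C D FFF FFF
| Tr_ntt : forall D, Tree C D (FNot FTT) FFF
| Tr_nff : forall D, Tree C D (FNot FFF) FTT
| Tr_nnot : forall D f psi, Tree C D f psi -> Tree C D (FNot (FNot f)) psi.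

Definition tree_formula (P : proc) (l : label) (psi : Form) : Prop :=
  Tree (Tr P FTT) [] (ante (Tr P FTT) (ALab l)) psi.

Fixpoint bvars (b : binder) : list var :=
  match b with
  | BIn _ x => [x]
  | BQ _ bs => (fix go (l : list binder) : list var :=
                  match l with [] => [] | b1 :: r => bvars b1 ++ go r end) bs
  end.

Fixpoint input_vars (P : proc) : list var :=
  match P with
  | PNil => []
  | PNu _ Q | PBang Q | POut _ _ _ Q => input_vars Q
  | PPar P1 P2 => input_vars P1 ++ input_vars P2
  | PIn _ b Q => bvars b ++ input_vars Q
  | PCase _ _ _ P1 P2 => input_vars P1 ++ input_vars P2
  end.

Fixpoint bound_vars (P : proc) : list var :=
  match P with
  | PNil => []
  | PNu _ Q | PBang Q | POut _ _ _ Q => bound_vars Q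
  | PPar P1 P2 => bound_vars P1 ++ bound_vars P2
  | PIn _ b Q => bvars b ++ bound_vars Q
  | PCase _ _ y P1 P2 => y :: bound_vars P1 ++ bound_vars P2
  end.

Fixpoint bound_names (P : proc) : list name :=
  match P with
  | PNil => []
  | PNu c Q => c :: bound_names Q
  | PBang Q | POut _ _ _ Q | PIn _ _ Q => bound_names Q
  | PPar P1 P2 => bound_names P1 ++ bound_names P2
  | PCase _ _ _ P1 P2 => bound_names P1 ++ bound_names P2
  end.

Fixpoint labels (P : proc) : list label :=
  match P with
  | PNil => []
  | PNu _ Q | PBang Q => labels Q
  | PPar P1 P2 => labels P1 ++ labels P2
  | PIn l _ Q | POut l _ _ Q => l :: labels Q
  | PCase l _ _ P1 P2 => l :: labels P1 ++ labels P2
  end.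

Fixpoint closed_in (bv : list var) (P : proc) : Prop :=
  match P with
  | PNil => True
  | PNu _ Q | PBang Q => closed_in bv Q
  | PPar P1 P2 => closed_in bv P1 /\ closed_in bv P2
  | PIn _ b Q => closed_in (bvars b ++ bv) Q
  | POut _ _ t Q =>
      (match t with TVar y => In y bv | TName _ => True end) /\ closed_in bv Q
  | PCase _ x y P1 P2 => In x bv /\ closed_in (y :: bv) P1 /\ closed_in bv P2
  end.

Definition closed (P : proc) : Prop := closed_in [] P.

From Stdlib Require Import List Arith Lia.
Import ListNotations.

(* The recursion defining [[l]] terminates on every formula built from the
   antecedents of T(P, tt), and it only ever outputs channel literals.
   Three measures decrease along it: unfolding a channel literal adds it to
   D, and only finitely many channel literals occur; unfolding a variable
   x̄ yields its antecedent, whose variables are bound strictly before x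
   (here the assumption that variables are bound exactly once is used); all
   other steps are structural.  Labels never occur in antecedents. *)

Definition chan_atoms (f : Form) : Prop :=
  forall a, In a (atoms f) -> exists c, a = AChan c.

Definition label_free (f : Form) : Prop :=
  forall l, ~ In (ALab l) (atoms f).

Definition vars_in (bv : list var) (f : Form) : Prop :=
  forall z, In (AVar z) (atoms f) -> In z bv.

Lemma chan_atoms_label_free f : chan_atoms f -> label_free f.
Proof. intros Hf l Hl. destruct (Hf _ Hl) as [c Hc]. discriminate. Qed.

Lemma chan_atoms_vars_in bv f : chan_atoms f -> vars_in bv f.
Proof. intros Hf z Hz. destruct (Hf _ Hz) as [c Hc]. discriminate. Qed.

Lemma Tree_chan_atoms C D f psi : Tree C D f psi -> chan_atoms psi.
Proof.
  induction 1; intros a Ha; simpl in *;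
    repeat match goal with H : In _ (_ ++ _) |- _ => apply in_app_iff in H end;
    intuition eauto.
Qed.

Fixpoint binder_nested_ind (Pb : binder -> Prop)
  (HIn : forall c x, Pb (BIn c x))
  (HQ : forall q bs, Forall Pb bs -> Pb (BQ q bs)) (b : binder) : Pb b :=
  match b with
  | BIn c x => HIn c x
  | BQ q bs => HQ q bs ((fix go (l : list binder) : Forall Pb l :=
                 match l with
                 | [] => Forall_nil _
                 | b1 :: r => Forall_cons _ (binder_nested_ind Pb HIn HQ b1) (go r)
                 end) bs)
  end.

Lemma hp_chan_atoms b : chan_atoms (hp b).
Proof.
  induction b as [c x | q bs Hbs] using binder_nested_ind.
  - intros a [<- | []]. eauto.
  - induction Hbs as [| b1 [| b2 r] Hb1 _ IH].
    + destruct q; intros a [].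
    + exact Hb1.
    + change (chan_atoms (qop q (hp b1) (hp (BQ q (b2 :: r))))).
      destruct q; intros a Ha; apply in_app_iff in Ha as [Ha | Ha]; auto.
Qed.

Lemma in_th phi b psi p : In (psi, p) (th phi b) ->
  exists c x, psi = FAnd phi (FAtom (AChan c)) /\ p = AVar x /\ In x (bvars b).
Proof.
  revert phi psi p.
  induction b as [c x | q bs Hbs] using binder_nested_ind; intros phi psi p H.
  - destruct H as [[= <- <-] | []]. exists c, x. simpl; auto.
  - induction Hbs as [| b1 r Hb1 _ IH]; [destruct H |].
    change (In (psi, p) (th phi b1 ++ th phi (BQ q r))) in H.
    change (bvars (BQ q (b1 :: r))) with (bvars b1 ++ bvars (BQ q r)).
    apply in_app_iff in H as [H | H];
      [destruct (Hb1 _ _ _ H) as (c & x & ? & ? & ?)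
      | destruct (IH H) as (c & x & ? & ? & ?)];
      exists c, x; rewrite in_app_iff; auto.
Qed.

Lemma label_free_FAnd f g : label_free f -> label_free g -> label_free (FAnd f g).
Proof. intros Hf Hg l Hl. apply in_app_iff in Hl as [Hl | Hl]; [eapply Hf | eapply Hg]; eauto. Qed.

Lemma Tr_label_free Q phi : label_free phi ->
  Forall (fun ca => label_free (fst ca)) (Tr Q phi).
Proof.
  revert phi. induction Q as [| | | l b Q IH | l c t Q IH | | l x y P1 IH1 P2 IH2];
    intros phi Hphi; simpl; rewrite ?Forall_app; auto.
  - repeat split; auto.
    + apply IH, label_free_FAnd; auto. apply chan_atoms_label_free, hp_chan_atoms.
    + apply Forall_forall. intros [psi p] Hin.
      destruct (in_th _ _ _ _ Hin) as (c & x & -> & _ & _).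
      apply label_free_FAnd; auto. intros l' [[=] | []].
  - repeat split; [apply IH1 | apply IH2 |]; try (apply label_free_FAnd; auto; intros l' [[=] | []]).
    constructor; auto.
Qed.

(* bv: the variables bound outside the process whose binding sequence is L *)
Definition ordered_by (L bv : list var) (ca : constr) : Prop :=
  forall x, snd ca = AVar x ->
    exists l1 l2, L = l1 ++ x :: l2 /\ vars_in (bv ++ l1) (fst ca).

Lemma ordered_by_scope L bv bv' ca :
  incl bv bv' -> ordered_by L bv ca -> ordered_by L bv' ca.
Proof.
  intros Hbv H x Hx. destruct (H x Hx) as (l1 & l2 & E & Hz).
  exists l1, l2. split; auto. intros z Hz'.
  apply Hz, in_app_iff in Hz' as [? | ?]; apply in_app_iff; auto.
Qed.

Lemma ordered_by_shift K L bv ca :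
  ordered_by L (K ++ bv) ca -> ordered_by (K ++ L) bv ca.
Proof.
  intros H x Hx. destruct (H x Hx) as (l1 & l2 & -> & Hz).
  exists (K ++ l1), l2. rewrite app_assoc. split; auto.
  intros z Hz'. specialize (Hz z Hz'). rewrite !in_app_iff in *. tauto.
Qed.

Lemma ordered_by_app_r L M bv ca : ordered_by L bv ca -> ordered_by (L ++ M) bv ca.
Proof.
  intros H x Hx. destruct (H x Hx) as (l1 & l2 & -> & Hz).
  exists l1, (l2 ++ M). rewrite <- app_assoc. auto.
Qed.

Lemma ordered_by_app_l K L bv ca : ordered_by L bv ca -> ordered_by (K ++ L) bv ca.
Proof.
  intros H. apply ordered_by_shift. apply (ordered_by_scope L bv); auto.
  intros z Hz. apply in_app_iff; auto.
Qed.

Lemma th_ordered_by phi b bv : vars_in bv phi ->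
  Forall (ordered_by (bvars b) bv) (th phi b).
Proof.
  intros Hphi. apply Forall_forall. intros [psi p] Hin x Hx.
  destruct (in_th _ _ _ _ Hin) as (c & y & -> & Hp & Hy). simpl in Hx. subst.
  injection Hp as <-. destruct (in_split _ _ Hy) as (l1 & l2 & E).
  exists l1, l2. split; auto.
  intros z Hz. apply in_app_iff in Hz as [Hz | [[=] | []]].
  apply in_app_iff; auto.
Qed.

Lemma Tr_ordered_by Q phi bv : vars_in bv phi -> closed_in bv Q ->
  Forall (ordered_by (bound_vars Q) bv) (Tr Q phi).
Proof.
  revert phi bv.
  induction Q as [| | P1 IH1 P2 IH2 | l b Q IH | l c t Q IH | | l x y P1 IH1 P2 IH2];
    intros phi bv Hphi Hcl; simpl in *; rewrite ?Forall_app; auto.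
  - destruct Hcl as [Hcl1 Hcl2]. split.
    + eapply Forall_impl; [intros ca; apply ordered_by_app_r | apply IH1; auto].
    + eapply Forall_impl; [intros ca; apply ordered_by_app_l | apply IH2; auto].
  - repeat split.
    + eapply Forall_impl; [intros ca; apply ordered_by_shift | apply IH; auto].
      intros z Hz. apply in_app_iff in Hz as [Hz | Hz]; apply in_app_iff; auto.
      left. exact (chan_atoms_vars_in _ _ (hp_chan_atoms b) z Hz).
    + eapply Forall_impl; [intros ca; apply ordered_by_app_r | apply th_ordered_by; auto].
    + constructor; auto. intros ? [=].
  - destruct Hcl as [_ Hcl]. repeat constructor; auto; intros ? [=].
  - destruct Hcl as (Hx & Hcl1 & Hcl2). repeat split.
    + eapply Forall_impl.
      { intros ca H. apply (ordered_by_app_r (y :: bound_vars P1)).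
        exact (ordered_by_shift [y] _ _ _ H). }
      apply IH1; auto. intros z Hz. apply in_app_iff in Hz as [Hz | [[= <-] | []]]; right; auto.
    + eapply Forall_impl; [intros ca; apply (ordered_by_app_l (y :: bound_vars P1)) |].
      apply IH2; auto. intros z Hz. apply in_app_iff in Hz as [Hz | [[= <-] | []]]; auto.
    + constructor; auto. intros ? [=].
Qed.

Fixpoint index_of (L : list nat) (z : nat) : nat :=
  match L with [] => 0 | a :: r => if Nat.eqb a z then 0 else S (index_of r z) end.

Lemma index_of_app_notin l1 x l2 : ~ In x l1 -> index_of (l1 ++ x :: l2) x = length l1.
Proof.
  induction l1 as [| a l1 IH]; intros Hx; simpl.
  - now rewrite Nat.eqb_refl.
  - destruct (Nat.eqb_spec a x) as [-> | _]; [now destruct Hx; left |].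
    rewrite IH; auto. intros H; apply Hx; now right.
Qed.

Lemma index_of_app_in l1 l2 z : In z l1 -> index_of (l1 ++ l2) z < length l1.
Proof.
  induction l1 as [| a l1 IH]; intros Hz; simpl in *; [contradiction |].
  destruct (Nat.eqb_spec a z); [lia |].
  destruct Hz as [-> | Hz]; [congruence |]. specialize (IH Hz). lia.
Qed.

Lemma ordered_by_index L C : NoDup L -> Forall (ordered_by L []) C ->
  forall phi x, In (phi, AVar x) C ->
  forall z, In (AVar z) (atoms phi) -> index_of L z < index_of L x.
Proof.
  intros Hnd HC phi x Hin z Hz.
  destruct (proj1 (Forall_forall _ _) HC _ Hin x eq_refl) as (l1 & l2 & -> & Hvars).
  rewrite index_of_app_notin.
  - apply index_of_app_in, Hvars, Hz.
  - intros Hx. apply NoDup_remove_2 in Hnd. apply Hnd, in_app_iff; auto.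
Qed.

Lemma filter_length_lt {A} (f g : A -> bool) (L : list A) a :
  (forall x, f x = true -> g x = true) -> In a L -> f a = false -> g a = true ->
  length (filter f L) < length (filter g L).
Proof.
  intros Hfg. induction L as [| b L IH]; intros Ha Hfa Hga; [destruct Ha |].
  assert (Hle : length (filter f L) <= length (filter g L)).
  { clear IH Ha. induction L as [| c L IHL]; simpl; auto.
    destruct (f c) eqn:Hc; [rewrite (Hfg c Hc); simpl |destruct (g c)]; simpl; lia. }
  simpl. destruct Ha as [-> | Ha].
  - rewrite Hfa, Hga. simpl. lia.
  - specialize (IH Ha Hfa Hga).
    destruct (f b) eqn:Hb; [rewrite (Hfg b Hb) | destruct (g b)]; simpl; lia.
Qed.

Definition lit_eq_dec (a b : bool * name) : {a = b} + {a <> b}.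
Proof. decide equality; [apply Nat.eq_dec | apply Bool.bool_dec]. Defined.

Definition unvisited (D : lits) (a : bool * name) : bool :=
  if in_dec lit_eq_dec a D then false else true.

Lemma unvisited_shrink (L : list (bool * name)) D a : In a L -> ~ In a D ->
  length (filter (unvisited (a :: D)) L) < length (filter (unvisited D) L).
Proof.
  intros Ha HaD. apply (filter_length_lt _ _ _ a); auto; unfold unvisited.
  - intros x. destruct (in_dec lit_eq_dec x (a :: D)), (in_dec lit_eq_dec x D); auto.
    exfalso; auto with datatypes.
  - destruct (in_dec lit_eq_dec a (a :: D)); auto. exfalso; auto with datatypes.
  - destruct (in_dec lit_eq_dec a D); tauto.
Qed.

Lemma in_ante C p a : In a (atoms (ante C p)) ->
  exists phi, In (phi, p) C /\ In a (atoms phi).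
Proof.
  unfold ante. set (fs := map fst _). intros H.
  assert (Hdisj : exists f, In f fs /\ In a (atoms f)).
  { clearbody fs. induction fs as [| f [| g fs] IH]; simpl in *; [contradiction | eauto |].
    apply in_app_iff in H as [H | H]; [eauto |].
    destruct (IH H) as (f' & Hf' & Ha). eauto. }
  destruct Hdisj as (f & Hf & Ha). apply in_map_iff in Hf as ([phi q] & <- & Hin).
  apply filter_In in Hin as [Hin Hq]. simpl in *.
  destruct (atom_eq_dec q p) as [-> | _]; [eauto | discriminate].
Qed.

Section TreeExistence.

Variable C : list constr.
Variable rank : var -> nat.
Hypothesis rank_ante : forall phi x, In (phi, AVar x) C ->
  forall z, In (AVar z) (atoms phi) -> rank z < rank x.
Hypothesis ante_label_free : Forall (fun ca => label_free (fst ca)) C.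

Let AC : list atom := flat_map (fun ca => atoms (fst ca)) C.

(* the channel literals that may ever be put into D *)
Let chan_lits : list (bool * name) :=
  flat_map (fun a => match a with AChan c => [(true, c); (false, c)] | _ => [] end) AC.

Definition tree_exists (D : lits) (f : Form) : Prop := exists psi, Tree C D f psi.

Definition literal_trees (D : lits) (a : atom) : Prop :=
  tree_exists D (FAtom a) /\ tree_exists D (FNot (FAtom a)).

Lemma ante_in_AC p : incl (atoms (ante C p)) AC.
Proof.
  intros a Ha. destruct (in_ante _ _ _ Ha) as (phi & Hin & Ha').
  apply in_flat_map. now exists (phi, p).
Qed.

Lemma label_notin_AC l : ~ In (ALab l) AC.
Proof.
  intros H. apply in_flat_map in H as (ca & Hin & Hl).
  exact (proj1 (Forall_forall _ _) ante_label_free ca Hin l Hl).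
Qed.

Lemma tree_exists_of_literals D f : (forall a, In a (atoms f) -> literal_trees D a) ->
  tree_exists D f /\ tree_exists D (FNot f).
Proof.
  induction f as [| | a | g IH | g IHg h IHh | g IHg h IHh]; intros Hlit; simpl in *.
  - split; eexists; constructor.
  - split; eexists; constructor.
  - apply Hlit; now left.
  - destruct (IH Hlit) as [[psi Hg] [npsi Hng]].
    split; eexists; [exact Hng | apply Tr_nnot, Hg].
  - destruct IHg as [[p1 H1] [n1 N1]]; [intros; apply Hlit, in_app_iff; auto |].
    destruct IHh as [[p2 H2] [n2 N2]]; [intros; apply Hlit, in_app_iff; auto |].
    split; eexists; [apply Tr_and | apply Tr_nand]; eauto.
  - destruct IHg as [[p1 H1] [n1 N1]]; [intros; apply Hlit, in_app_iff; auto |].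
    destruct IHh as [[p2 H2] [n2 N2]]; [intros; apply Hlit, in_app_iff; auto |].
    split; eexists; [apply Tr_or | apply Tr_nor]; eauto.
Qed.

Lemma var_literal_trees D : (forall c, In (AChan c) AC -> literal_trees D (AChan c)) ->
  forall x, literal_trees D (AVar x).
Proof.
  intros Hchan x.
  induction x as [x IH] using (well_founded_ind (well_founded_ltof _ rank)).
  destruct (tree_exists_of_literals D (ante C (AVar x))) as [[psi Hpsi] [npsi Hnpsi]].
  - intros [c | z | l] Ha.
    + apply Hchan, (ante_in_AC (AVar x)), Ha.
    + apply IH. destruct (in_ante _ _ _ Ha) as (phi & Hin & Hz). exact (rank_ante _ _ Hin _ Hz).
    + destruct (label_notin_AC l). apply (ante_in_AC (AVar x)), Ha.
  - split; eexists; [apply Tr_var, Hpsi | apply Tr_nvar, Hnpsi].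
Qed.

Lemma tree_exists_in_AC D f : incl (atoms f) AC -> tree_exists D f.
Proof.
  remember (length (filter (unvisited D) chan_lits)) as n eqn:Hn.
  revert D f Hn. induction n as [n IH] using (well_founded_ind lt_wf).
  intros D f -> Hf.
  assert (Hchan : forall c, In (AChan c) AC -> literal_trees D (AChan c)).
  { intros c Hc.
    assert (Hlit : forall b, In (b, c) chan_lits).
    { intros b. apply in_flat_map. exists (AChan c). destruct b; simpl; auto. }
    split.
    - destruct (in_dec lit_eq_dec (true, c) D) as [Hd | Hd].
      + eexists; apply Tr_chan_old, Hd.
      + destruct (IH _ (unvisited_shrink _ _ _ (Hlit true) Hd) ((true, c) :: D)
                    (ante C (AChan c)) eq_refl (ante_in_AC _)) as [psi Hpsi].
        eexists; apply Tr_chan_new; eauto.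
    - destruct (in_dec lit_eq_dec (false, c) D) as [Hd | Hd].
      + eexists; apply Tr_nchan_old, Hd.
      + destruct (IH _ (unvisited_shrink _ _ _ (Hlit false) Hd) ((false, c) :: D)
                    (FNot (ante C (AChan c))) eq_refl (ante_in_AC _)) as [psi Hpsi].
        eexists; apply Tr_nchan_new; eauto. }
  apply tree_exists_of_literals. intros [c | x | l] Ha.
  - apply Hchan, Hf, Ha.
  - apply var_literal_trees, Hchan.
  - destruct (label_notin_AC l). apply Hf, Ha.
Qed.

End TreeExistence.

Theorem lemmaB3 (P : proc) :
  closed P ->
  NoDup (bound_vars P) ->
  NoDup (bound_names P) ->
  NoDup (labels P) ->
  forall l, In l (labels P) ->
    (exists psi, tree_formula P l psi) /\
    (forall psi, tree_formula P l psi ->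
       (forall x, In x (input_vars P) -> ~ In (AVar x) (atoms psi)) /\
       (forall a, In a (atoms psi) -> exists c, a = AChan c)).
Proof.
  intros Hclosed Hbv _ _ l _. split.
  - assert (Hord : Forall (ordered_by (bound_vars P) []) (Tr P FTT)).
    { apply Tr_ordered_by; [intros z [] | exact Hclosed]. }
    assert (Hlab : Forall (fun ca => label_free (fst ca)) (Tr P FTT)).
    { apply Tr_label_free. intros l' []. }
    apply (tree_exists_in_AC _ _ (ordered_by_index _ _ Hbv Hord) Hlab), ante_in_AC.
  - intros psi Hpsi. pose proof (Tree_chan_atoms _ _ _ _ Hpsi) as Hchan.
    split; [| exact Hchan].
    intros x _ Hx. destruct (Hchan _ Hx) as [c Hc]. discriminate.
Qed.
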